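(* Let $n\ge2$ be an integer, $\sigma\ge0$, $R'>0$, and define $a_1=\frac{n}{2R'}$, $a_2=\frac{a_1}{n-1}$, $a_k=\min\big\{(1+\frac1{n-1})a_{k-1},\frac{\sqrt{n(n+\sigma A_{k-1})}}{2R'}\big\}$ for $k\ge3$, where $A_k=\sum_{i=1}^ka_i$. Let $k_0=\big\lceil\frac{\log B_{n,\sigma,R'}}{\log n-\log(n-1)}\big\rceil$ with $B_{n,\sigma,R'}=\frac{\sigma n(n-1)}{4R'}+\sqrt{(\frac{\sigma n(n-1)}{4R'})^2+n^2}$. Then for all $k>k_0$, $A_k\ge c(k-k_0+n-1)^2$, where $c=\frac{(n-1)^2\sigma}{(4R')^2n}$. *)

From Stdlib Require Import Reals ZArith.
Open Scope R_scope.

(* aA n sigma Rp k = (a_k, A_k), for k >= 1; index 0 is an unused dummy (0,0). *)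
Fixpoint aA (n : nat) (sigma Rp : R) (k : nat) : R * R :=
  match k with
  | O => (0, 0)
  | S O => (INR n / (2 * Rp), INR n / (2 * Rp))
  | S (S O) =>
      let a1 := INR n / (2 * Rp) in
      let a2 := a1 / (INR n - 1) in (a2, a1 + a2)
  | S k' =>
      let p := aA n sigma Rp k' in
      let ak := Rmin ((1 + 1 / (INR n - 1)) * fst p)
                     (sqrt (INR n * (INR n + sigma * snd p)) / (2 * Rp)) in
      (ak, snd p + ak)
  end.

Definition a_seq n sigma Rp k := fst (aA n sigma Rp k).
Definition A_seq n sigma Rp k := snd (aA n sigma Rp k).

Definition B_const (n : nat) (sigma Rp : R) : R :=
  let t := sigma * INR n * (INR n - 1) / (4 * Rp) in
  t + sqrt (t ^ 2 + INR n ^ 2).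

Definition c_const (n : nat) (sigma Rp : R) : R :=
  (INR n - 1) ^ 2 * sigma / ((4 * Rp) ^ 2 * INR n).

From Stdlib Require Import Reals ZArith Lra Lia Psatz.
Open Scope R_scope.

(* Put b_k = 2 R' a_k, q = n / (n - 1) and t = sigma n (n - 1) / (4 R'), so that
   B = t + sqrt (t^2 + n^2) is the positive root of x^2 = n^2 + 2 t x.  While
   b_k = q^(k-1) and A_k = n a_k, the radicand n (n + sigma A_k) equals
   n^2 + 2 t q b_k, so b grows geometrically until q b_k would exceed B; from then
   on b_k >= B, because A_k >= n a_k holds throughout.  The choice of k0 gives
   q^k0 >= B, hence a_(k0+1) >= 2 c n.  Afterwards a_k >= 2 c T and A_k >= c T^2
   propagate from T to T + 1 (for T >= n - 1), since q T >= T + 1 and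
   sqrt (n sigma c T^2) = (n - 1) sigma T / (4 R') >= 2 R' (2 c (T + 1)). *)

Lemma Rmult_Rmin_distr_l r x y : 0 <= r -> r * Rmin x y = Rmin (r * x) (r * y).
Proof.
  intros Hr; unfold Rmin.
  destruct (Rle_dec x y), (Rle_dec (r * x) (r * y)); nra.
Qed.

Lemma le_sqrt_of_sqr_le y X : 0 <= y -> y * y <= X -> y <= sqrt X.
Proof.
  intros Hy HyX; rewrite <- (sqrt_square y) by exact Hy.
  now apply sqrt_le_1_alt.
Qed.

Lemma le_quadratic_root t N x : 0 <= x ->
  x <= t + sqrt (t ^ 2 + N ^ 2) <-> x * x <= N * N + 2 * t * x.
Proof.
  intros Hx.
  set (S := sqrt (t ^ 2 + N ^ 2)).
  assert (HS2 : S * S = t ^ 2 + N ^ 2) by (apply sqrt_sqrt; nra).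
  assert (HS : 0 <= S) by apply sqrt_pos.
  assert (HtS : t <= S) by nra.
  (* x^2 - 2 t x - N^2 = (x - t - S) (x - t + S), and the second factor is nonnegative. *)
  split; intros H.
  - assert (0 <= x - t + S) by lra. nra.
  - destruct (Rle_or_lt x (t + S)) as [Hle | Hlt]; [exact Hle |].
    assert (0 < x - t - S) by lra. nra.
Qed.

Lemma pow_ge_of_ln_div_le q B K : 1 < q -> 0 < B -> ln B / ln q <= INR K -> B <= q ^ K.
Proof.
  intros Hq HB HK.
  assert (Hlnq : 0 < ln q) by (rewrite <- ln_1; apply ln_increasing; lra).
  assert (HlnB : ln B <= ln (q ^ K)).
  { rewrite ln_pow by lra.
    replace (ln B) with (ln B / ln q * ln q) by (field; lra).
    apply Rmult_le_compat_r; lra. }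
  destruct (Rle_or_lt B (q ^ K)) as [Hle | Hlt]; [exact Hle |].
  assert (ln (q ^ K) < ln B) by (apply ln_increasing; [apply pow_lt |]; lra).
  lra.
Qed.

Section Recursion.

Variables (N sigma Rp : R).
Hypotheses (N_ge2 : 2 <= N) (sigma_ge0 : 0 <= sigma) (Rp_gt0 : 0 < Rp).

Let q := 1 + 1 / (N - 1).
Let t := sigma * N * (N - 1) / (4 * Rp).
Let B := t + sqrt (t ^ 2 + N ^ 2).
Let c := (N - 1) ^ 2 * sigma / ((4 * Rp) ^ 2 * N).

Variables a A : nat -> R.
Hypothesis a_succ : forall k, (2 <= k)%nat ->
  a (S k) = Rmin (q * a k) (sqrt (N * (N + sigma * A k)) / (2 * Rp)).
Hypothesis A_succ : forall k, (2 <= k)%nat -> A (S k) = A k + a (S k).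
Hypotheses (a_2 : 2 * Rp * a 2 = q) (A_2 : A 2 = N * a 2).

Lemma q_mul : q * (N - 1) = N.
Proof. unfold q; field; lra. Qed.

Lemma q_gt1 : 1 < q.
Proof. unfold q; assert (0 < 1 / (N - 1)) by (apply Rdiv_lt_0_compat; lra); lra. Qed.

Lemma t_ge0 : 0 <= t.
Proof.
  unfold t; apply Rmult_le_pos.
  - apply Rmult_le_pos; [apply Rmult_le_pos |]; lra.
  - left; apply Rinv_0_lt_compat; lra.
Qed.

Lemma N_le_B : N <= B.
Proof.
  assert (N <= sqrt (t ^ 2 + N ^ 2)) by (apply le_sqrt_of_sqr_le; nra).
  unfold B; pose proof t_ge0; lra.
Qed.

Lemma two_t_scaled x : 2 * t * (2 * Rp * x) = sigma * N * (N - 1) * x.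
Proof. unfold t; field; lra. Qed.

Lemma scaled_a_succ k : (2 <= k)%nat ->
  2 * Rp * a (S k) = Rmin (q * (2 * Rp * a k)) (sqrt (N * (N + sigma * A k))).
Proof.
  intros Hk; rewrite a_succ, Rmult_Rmin_distr_l by (auto; lra).
  f_equal; [ring | field; lra].
Qed.

Lemma a_ge0_A_ge_Na k : (2 <= k)%nat -> 0 <= a k /\ N * a k <= A k.
Proof.
  intros Hk; induction Hk as [| k Hk [Ha HA]].
  - split; [| lra].
    assert (0 < a 2) by (pose proof q_gt1; nra). lra.
  - assert (Hle : a (S k) <= q * a k) by (rewrite a_succ by exact Hk; apply Rmin_l).
    assert (H0 : 0 <= a (S k)).
    { rewrite a_succ by exact Hk; apply Rmin_glb.
      - pose proof q_gt1; nra.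
      - apply Rmult_le_pos; [apply sqrt_pos | left; apply Rinv_0_lt_compat; lra]. }
    split; [exact H0 |].
    rewrite A_succ by exact Hk.
    assert (Hm : (N - 1) * a (S k) <= (N - 1) * (q * a k)) by (apply Rmult_le_compat_l; lra).
    replace ((N - 1) * (q * a k)) with (N * a k) in Hm
      by (rewrite <- Rmult_assoc, (Rmult_comm (N - 1) q), q_mul; reflexivity).
    lra.
Qed.

Definition geometric_at k := 2 * Rp * a k = q ^ Nat.pred k /\ A k = N * a k.
Definition saturated_at k := B <= 2 * Rp * a k.

Lemma geometric_step k : (2 <= k)%nat -> geometric_at k ->
  geometric_at (S k) \/ saturated_at (S k).
Proof.
  intros Hk [Hb HA]; unfold geometric_at, saturated_at.
  set (x := q * (2 * Rp * a k)).
  assert (HX : N * (N + sigma * A k) = N * N + 2 * t * x).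
  { unfold x, t, q; rewrite HA; field; lra. }
  pose proof (scaled_a_succ k Hk) as Hs; rewrite HX in Hs; fold x in Hs.
  assert (Hx0 : 0 <= x).
  { destruct (a_ge0_A_ge_Na k Hk); pose proof q_gt1.
    unfold x; apply Rmult_le_pos; [| apply Rmult_le_pos]; lra. }
  destruct (Rle_or_lt x B) as [HxB | HBx].
  - assert (Hsq : x <= sqrt (N * N + 2 * t * x)).
    { apply le_sqrt_of_sqr_le; [exact Hx0 |]. now apply le_quadratic_root. }
    rewrite Rmin_left in Hs by exact Hsq.
    assert (Ha' : a (S k) = q * a k).
    { apply (Rmult_eq_reg_l (2 * Rp)); [rewrite Hs; unfold x; ring | lra]. }
    left; split.
    + rewrite Hs; unfold x; rewrite Hb; destruct k as [| [| k]]; [lia | lia | reflexivity].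
    + rewrite A_succ, HA, Ha' by exact Hk; unfold q; field; lra.
  - right; rewrite Hs; apply Rmin_glb; [lra |].
    pose proof N_le_B; pose proof t_ge0.
    apply le_sqrt_of_sqr_le; [lra |].
    assert (HB2 := proj1 (le_quadratic_root t N B ltac:(lra)) (Rle_refl B)).
    assert (2 * t * B <= 2 * t * x) by (apply Rmult_le_compat_l; lra).
    lra.
Qed.

Lemma saturated_step k : (2 <= k)%nat -> saturated_at k -> saturated_at (S k).
Proof.
  unfold saturated_at; intros Hk Hb.
  destruct (a_ge0_A_ge_Na k Hk) as [Ha HA].
  pose proof N_le_B; pose proof t_ge0; pose proof q_gt1.
  rewrite scaled_a_succ by exact Hk; apply Rmin_glb; [nra |].
  apply le_sqrt_of_sqr_le; [lra |].
  assert (HB2 := proj1 (le_quadratic_root t N B ltac:(lra)) (Rle_refl B)).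
  (* 2 t B <= 2 t (2 Rp a_k) = sigma N (N - 1) a_k <= sigma N A_k *)
  assert (HtB : 2 * t * B <= 2 * t * (2 * Rp * a k)) by (apply Rmult_le_compat_l; lra).
  rewrite two_t_scaled in HtB.
  assert (sigma * N * ((N - 1) * a k) <= sigma * N * A k).
  { apply Rmult_le_compat_l; [apply Rmult_le_pos |]; lra. }
  nra.
Qed.

Lemma geometric_or_saturated k : (2 <= k)%nat -> geometric_at k \/ saturated_at k.
Proof.
  intros Hk; induction Hk as [| k Hk IH].
  - left; split; [rewrite a_2; simpl; ring | exact A_2].
  - destruct IH as [Hg | Hs].
    + exact (geometric_step k Hk Hg).
    + right; exact (saturated_step k Hk Hs).
Qed.

Lemma saturated_after K : (1 <= K)%nat -> B <= q ^ K -> saturated_at (S K).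
Proof.
  intros HK HBq.
  destruct (geometric_or_saturated (S K) ltac:(lia)) as [[Hb _] | Hs]; [| exact Hs].
  unfold saturated_at; rewrite Hb; exact HBq.
Qed.

Lemma c_ge0 : 0 <= c.
Proof.
  unfold c; apply Rmult_le_pos.
  - apply Rmult_le_pos; [apply pow_le |]; lra.
  - left; apply Rinv_0_lt_compat, Rmult_lt_0_compat; [apply pow_lt |]; lra.
Qed.

Lemma c_scaled_le_B : 2 * Rp * (2 * c * N) <= B.
Proof.
  assert (Hu : 0 <= (N - 1) * sigma / (4 * Rp)).
  { apply Rmult_le_pos; [apply Rmult_le_pos | left; apply Rinv_0_lt_compat]; lra. }
  assert (Hc : 2 * Rp * (2 * c * N) = (N - 1) * ((N - 1) * sigma / (4 * Rp)))
    by (unfold c; field; lra).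
  assert (Ht : t = N * ((N - 1) * sigma / (4 * Rp))) by (unfold t; field; lra).
  assert ((N - 1) * ((N - 1) * sigma / (4 * Rp)) <= N * ((N - 1) * sigma / (4 * Rp)))
    by (apply Rmult_le_compat_r; lra).
  assert (0 <= sqrt (t ^ 2 + N ^ 2)) by apply sqrt_pos.
  unfold B; lra.
Qed.

Lemma quadratic_bound_start k : (2 <= k)%nat -> saturated_at k ->
  2 * c * N <= a k /\ c * N ^ 2 <= A k.
Proof.
  unfold saturated_at; intros Hk Hb.
  destruct (a_ge0_A_ge_Na k Hk) as [_ HA].
  pose proof c_scaled_le_B; pose proof c_ge0.
  assert (Ha : 2 * c * N <= a k) by (apply (Rmult_le_reg_l (2 * Rp)); lra).
  split; [exact Ha |].
  assert (N * (2 * c * N) <= N * a k) by (apply Rmult_le_compat_l; lra).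
  assert (0 <= c * N * N) by (apply Rmult_le_pos; [apply Rmult_le_pos |]; lra).
  nra.
Qed.

Lemma succ_le_q_mul T : N - 1 <= T -> T + 1 <= q * T.
Proof.
  intros HT.
  assert (q * T - (T + 1) = (T - (N - 1)) / (N - 1)) by (unfold q; field; lra).
  assert (0 <= (T - (N - 1)) / (N - 1))
    by (apply Rmult_le_pos; [lra | left; apply Rinv_0_lt_compat; lra]).
  lra.
Qed.

Lemma scaled_c_le_sqrt T X : N - 1 <= T -> c * T ^ 2 <= X ->
  2 * Rp * (2 * c * (T + 1)) <= sqrt (N * (N + sigma * X)).
Proof.
  intros HT HX.
  set (u := (N - 1) * sigma / (4 * Rp)).
  assert (Hu : 0 <= u).
  { apply Rmult_le_pos; [apply Rmult_le_pos | left; apply Rinv_0_lt_compat]; lra. }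
  assert (Hy : u * T <= sqrt (N * (N + sigma * X))).
  { apply le_sqrt_of_sqr_le; [apply Rmult_le_pos; lra |].
    replace (u * T * (u * T)) with (N * sigma * (c * T ^ 2)) by (unfold u, c; field; lra).
    assert (N * sigma * (c * T ^ 2) <= N * sigma * X)
      by (apply Rmult_le_compat_l; [apply Rmult_le_pos |]; lra).
    assert (0 <= N * N) by nra.
    replace (N * (N + sigma * X)) with (N * N + N * sigma * X) by ring.
    lra. }
  assert (Hcu : 2 * Rp * (2 * c * (T + 1)) = u * ((N - 1) * (T + 1) / N))
    by (unfold u, c; field; lra).
  assert ((N - 1) * (T + 1) / N <= T).
  { apply (Rmult_le_reg_l N); [lra |].
    replace (N * ((N - 1) * (T + 1) / N)) with ((N - 1) * (T + 1)) by (field; lra).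
    nra. }
  assert (u * ((N - 1) * (T + 1) / N) <= u * T) by (apply Rmult_le_compat_l; lra).
  lra.
Qed.

Lemma quadratic_bound_step k T : (2 <= k)%nat -> N - 1 <= T ->
  2 * c * T <= a k -> c * T ^ 2 <= A k ->
  2 * c * (T + 1) <= a (S k) /\ c * (T + 1) ^ 2 <= A (S k).
Proof.
  intros Hk HT Ha HA.
  pose proof c_ge0; pose proof q_gt1.
  assert (Ha' : 2 * c * (T + 1) <= a (S k)).
  { apply (Rmult_le_reg_l (2 * Rp)); [lra |].
    rewrite scaled_a_succ by exact Hk; apply Rmin_glb; [| exact (scaled_c_le_sqrt T (A k) HT HA)].
    pose proof (succ_le_q_mul T HT).
    assert (2 * Rp * (2 * c * (T + 1)) <= q * (2 * Rp * (2 * c * T))).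
    { replace (q * (2 * Rp * (2 * c * T))) with (2 * Rp * (2 * c * (q * T))) by ring.
      apply Rmult_le_compat_l; [lra |]; apply Rmult_le_compat_l; lra. }
    assert (q * (2 * Rp * (2 * c * T)) <= q * (2 * Rp * a k)).
    { apply Rmult_le_compat_l; [lra |]; apply Rmult_le_compat_l; lra. }
    lra. }
  split; [exact Ha' |].
  rewrite A_succ by exact Hk; nra.
Qed.

Lemma quadratic_bound k j : (2 <= k)%nat -> saturated_at k ->
  2 * c * (INR j + N) <= a (k + j) /\ c * (INR j + N) ^ 2 <= A (k + j).
Proof.
  intros Hk Hb; induction j as [| j [Ha HA]].
  - rewrite Nat.add_0_r; simpl INR; rewrite Rplus_0_l.
    exact (quadratic_bound_start k Hk Hb).
  - rewrite Nat.add_succ_r, S_INR.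
    replace (INR j + 1 + N) with (INR j + N + 1) by ring.
    apply quadratic_bound_step; [lia | pose proof (pos_INR j); lra | exact Ha | exact HA].
Qed.

Lemma A_quadratic_after K j : (1 <= K)%nat -> B <= q ^ K ->
  c * (INR j + N) ^ 2 <= A (S K + j).
Proof.
  intros HK HBq.
  exact (proj2 (quadratic_bound (S K) j ltac:(lia) (saturated_after K HK HBq))).
Qed.

End Recursion.

Lemma a_seq_succ n sigma Rp k : (2 <= k)%nat ->
  a_seq n sigma Rp (S k) =
    Rmin ((1 + 1 / (INR n - 1)) * a_seq n sigma Rp k)
         (sqrt (INR n * (INR n + sigma * A_seq n sigma Rp k)) / (2 * Rp)).
Proof. intros Hk; destruct k as [| [| k]]; [lia | lia | reflexivity]. Qed.

Lemma A_seq_succ n sigma Rp k : (2 <= k)%nat ->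
  A_seq n sigma Rp (S k) = A_seq n sigma Rp k + a_seq n sigma Rp (S k).
Proof. intros Hk; destruct k as [| [| k]]; [lia | lia | reflexivity]. Qed.

Lemma a_seq_2 n sigma Rp : INR n - 1 <> 0 -> Rp <> 0 ->
  2 * Rp * a_seq n sigma Rp 2 = 1 + 1 / (INR n - 1).
Proof. intros Hn HRp; unfold a_seq; simpl fst; field; auto. Qed.

Lemma A_seq_2 n sigma Rp : INR n - 1 <> 0 -> Rp <> 0 ->
  A_seq n sigma Rp 2 = INR n * a_seq n sigma Rp 2.
Proof. intros Hn HRp; unfold a_seq, A_seq; simpl fst; simpl snd; field; auto. Qed.

Lemma ln_one_plus_inv_pred N : 1 < N -> ln (1 + 1 / (N - 1)) = ln N - ln (N - 1).
Proof.
  intros HN; replace (1 + 1 / (N - 1)) with (N * / (N - 1)) by (field; lra).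
  rewrite ln_mult, ln_Rinv; [ring | lra | lra | apply Rinv_0_lt_compat; lra].
Qed.

Lemma A_seq_quadratic_after n sigma Rp K j :
  (2 <= n)%nat -> 0 <= sigma -> 0 < Rp -> (1 <= K)%nat ->
  B_const n sigma Rp <= (1 + 1 / (INR n - 1)) ^ K ->
  c_const n sigma Rp * (INR j + INR n) ^ 2 <= A_seq n sigma Rp (S K + j).
Proof.
  intros Hn Hsigma HRp HK HBq.
  assert (HN : 2 <= INR n) by (apply (le_INR 2); exact Hn).
  exact (A_quadratic_after _ _ _ HN Hsigma HRp _ _
           (a_seq_succ n sigma Rp) (A_seq_succ n sigma Rp)
           (a_seq_2 n sigma Rp ltac:(lra) ltac:(lra))
           (A_seq_2 n sigma Rp ltac:(lra) ltac:(lra)) K j HK HBq).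
Qed.

Theorem proposition3 (n : nat) (sigma Rp : R) :
  (2 <= n)%nat -> 0 <= sigma -> 0 < Rp ->
  forall k0 : Z,
    (* k0 = ceiling of ln B / (ln n - ln (n-1)) *)
    IZR k0 - 1 < ln (B_const n sigma Rp) / (ln (INR n) - ln (INR n - 1)) <= IZR k0 ->
    forall k : nat, (k0 < Z.of_nat k)%Z ->
      A_seq n sigma Rp k >= c_const n sigma Rp * (INR k - IZR k0 + INR n - 1) ^ 2.
Proof.
  intros Hn Hsigma HRp k0 [_ Hk0] k Hk.
  assert (HN : 2 <= INR n) by (apply (le_INR 2); exact Hn).
  assert (HNB : INR n <= B_const n sigma Rp) by exact (N_le_B _ _ _ HN Hsigma HRp).
  pose proof (q_gt1 _ HN) as Hq.
  rewrite <- ln_one_plus_inv_pred in Hk0 by lra.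
  assert (Hk0pos : (0 < k0)%Z).
  { apply lt_0_IZR; eapply Rlt_le_trans; [| exact Hk0].
    apply Rdiv_lt_0_compat; rewrite <- ln_1; apply ln_increasing; lra. }
  set (K0 := Z.to_nat k0).
  assert (HK0 : IZR k0 = INR K0) by (unfold K0; rewrite INR_IZR_INZ, Z2Nat.id; [reflexivity | lia]).
  rewrite HK0 in Hk0 |- *.
  pose proof (pow_ge_of_ln_div_le _ (B_const n sigma Rp) K0 Hq ltac:(lra) Hk0) as HBq.
  pose proof (A_seq_quadratic_after n sigma Rp K0 (k - S K0) Hn Hsigma HRp
                ltac:(lia) HBq) as HA.
  replace (S K0 + (k - S K0))%nat with k in HA by lia.
  rewrite minus_INR, S_INR in HA by lia.
  apply Rle_ge.
  replace (INR k - INR K0 + INR n - 1) with (INR k - (INR K0 + 1) + INR n) by ring.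
  exact HA.
Qed.
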